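(* Let $M$ be a matroid of rank $k$ on $[n]$ with exactly two connected components, i.e. $M=M_1\oplus M_2$ where $M_1$ has ground set $S$ and $M_2$ has ground set $T=[n]\setminus S$. Suppose $\{S,T\}$ is not a noncrossing partition of $[n]$, i.e. there exist $a<b<c<d$ in cyclic order on $[n]$ with $a,c\in S$ and $b,d\in T$. Then $\Gamma_M$ has a two-dimensional face which is not a positroid polytope; specifically, a square face with vertices $e_{R\cup\{a,b\}}, e_{R\cup\{a,d\}}, e_{R\cup\{b,c\}}, e_{R\cup\{c,d\}}$ for some such $a,b,c,d$ and some $R\subseteq[n]$ of size $k-2$ disjoint from $\{a,b,c,d\}$.
   Context: For $I\subseteq[n]$, $e_I=\sum_{i\in I}e_i\in\mathbb{R}^n$. The matroid polytope of a matroid $M$ on $[n]$ with bases $\mathcal{B}$ is $\Gamma_M=\mathrm{conv}\{e_B:B\in\mathcal{B}\}$. A positroid of rank $k$ on $[n]$ is a matroid whose bases are the $I\in\binom{[n]}{k}$ with $p_I(A)\ne0$ for some real $k\times n$ matrix $A$ of rank $k$ with all maximal minors $p_I(A)\ge 0$; a positroid polytope is the matroid polytope of a positroid. A matroid is connected if it is not a direct sum of two matroids on nonempty ground sets; the connected components are the ground sets of the summands in the decomposition into connected matroids. *)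

From HB Require Import structures.
From mathcomp Require Import all_boot all_order all_algebra.
Set Implicit Arguments. Unset Strict Implicit. Unset Printing Implicit Defensive.
Import Order.TTheory GRing.Theory Num.Theory.

Definition is_matroid (n : nat) (E : {set 'I_n}) (Bs : {set {set 'I_n}}) : Prop :=
  Bs != set0 /\
  (forall B, B \in Bs -> B \subset E) /\
  (forall B1 B2, B1 \in Bs -> B2 \in Bs -> forall x, x \in B1 :\: B2 ->
     exists2 y, y \in B2 :\: B1 & (y |: (B1 :\ x)) \in Bs).

Definition direct_sum (n : nat) (Bs1 Bs2 : {set {set 'I_n}}) : {set {set 'I_n}} :=
  [set B1 :|: B2 | B1 in Bs1, B2 in Bs2].

Definition connected_matroid (n : nat) (E : {set 'I_n}) (Bs : {set {set 'I_n}}) : Prop :=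
  is_matroid E Bs /\
  ~ (exists E1 E2 Bs1 Bs2,
       [/\ E1 != set0, E2 != set0, [disjoint E1 & E2], E1 :|: E2 = E &
       [/\ is_matroid E1 Bs1, is_matroid E2 Bs2 & Bs = direct_sum Bs1 Bs2]]).

Definition cyclic_order (n : nat) (a b c d : 'I_n) : bool :=
  [|| [&& a < b, b < c & c < d], [&& b < c, c < d & d < a],
      [&& c < d, d < a & a < b] | [&& d < a, a < b & b < c]]%N.

Local Open Scope ring_scope.

Definition evec (R : realFieldType) (n : nat) (I : {set 'I_n}) : 'rV[R]_n :=
  \row_i (i \in I)%:R.

Definition in_conv (R : realFieldType) (n : nat) (Bs : {set {set 'I_n}}) (x : 'rV[R]_n) : Prop :=
  exists l : {ffun {set 'I_n} -> R},
    [/\ forall B, 0 <= l B, \sum_(B in Bs) l B = 1 &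
        x = \sum_(B in Bs) l B *: evec R B].

Definition matroid_polytope (R : realFieldType) (n : nat) (Bs : {set {set 'I_n}}) :
  'rV[R]_n -> Prop := in_conv Bs.

Definition dotv (R : realFieldType) (n : nat) (w x : 'rV[R]_n) : R :=
  \sum_i w 0 i * x 0 i.

Definition is_face (R : realFieldType) (n : nat) (P F : 'rV[R]_n -> Prop) : Prop :=
  exists w : 'rV[R]_n, forall x,
    F x <-> (P x /\ forall y, P y -> dotv w y <= dotv w x).

(* maximal minor p_I(A): columns of A indexed by I, in increasing order *)
Definition pminor (R : realFieldType) (k n : nat) (A : 'M[R]_(k, n)) (I : {set 'I_n}) : R :=
  \det (\matrix_(i < k, j < k) oapp (A i) 0 (nth None (map Some (enum I)) j)).

Definition is_positroid (R : realFieldType) (n k : nat) (Bs : {set {set 'I_n}}) : Prop :=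
  exists A : 'M[R]_(k, n),
    [/\ \rank A = k,
        forall I : {set 'I_n}, #|I| = k -> 0 <= pminor A I &
        Bs = [set I : {set 'I_n} | (#|I| == k) && (pminor A I != 0)]].

Definition is_positroid_polytope (R : realFieldType) (n : nat) (F : 'rV[R]_n -> Prop) : Prop :=
  exists k (Bs : {set {set 'I_n}}), is_positroid R k Bs /\
    forall x, matroid_polytope (R := R) Bs x <-> F x.

From HB Require Import structures.
From mathcomp Require Import all_boot all_order all_algebra all_fingroup zify ring.
Set Implicit Arguments. Unset Strict Implicit. Unset Printing Implicit Defensive.
Import Order.TTheory GRing.Theory Num.Theory.
Local Open Scope ring_scope.

(* Both summands have connected basis-exchange graphs.  Walking in the first
   one from a to c, some exchange B1 - u + v moves across the chord bd;
   walking in the second one from b to d, some exchange B2 - x + y moves across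
   the chord uv, so that u, x, v, y are in cyclic order.  For
   R = (B1 - u) + (B2 - x), the bases lying between R and R + {u, x, v, y} are
   exactly R + ux, R + uy, R + vx and R + vy: a face of the matroid polytope,
   cut out by a 0/+1/-1 weight.  If it were a positroid polytope, the
   three-term Plucker relation p_uv p_xy = p_ux p_vy + p_uy p_vx (up to
   rotation) with the four edge minors positive would make the diagonal
   R + uv a basis too. *)

(** * Maximal minors and the three-term Plucker relation *)

Lemma rem_cat_cons (T : eqType) (x : T) (p q : seq T) :
  x \notin p -> rem x (p ++ x :: q) = p ++ q.
Proof.
elim: p => [|y p IHp] /=; first by rewrite eqxx.
by rewrite in_cons negb_or eq_sym => /andP [/negPf -> /IHp ->].
Qed.

Lemma rem_enum_setU1 (T : finType) (x : T) (I : {set T}) :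
  x \notin I -> rem x (enum (x |: I)) = enum I.
Proof.
move=> xI; rewrite rem_filter ?enum_uniq // /enum_mem -filter_predI.
by apply: eq_filter => y /=; rewrite !inE; case: eqP => // ->; rewrite (negPf xI).
Qed.

Lemma count_enum_setU1 (T : finType) (P : pred T) (x : T) (I : {set T}) :
  x \notin I -> count P (enum (x |: I)) = (P x + count P (enum I))%N.
Proof.
move=> xI; have xU : x \in enum (x |: I) by rewrite mem_enum setU11.
by rewrite (seq.permP (perm_to_rem xU)) /= rem_enum_setU1.
Qed.

Lemma sorted_enum_ord (n : nat) (I : {set 'I_n}) : sorted <%O (enum I).
Proof.
have : sorted ltn (map val (enum I)).
  rewrite -[enum _](eq_filter (mem_enum _)).
  rewrite -(eq_filter (mem_map val_inj _)) -filter_map.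
  by rewrite (sorted_filter ltn_trans) // unlock val_ord_enum iota_ltn_sorted.
by rewrite sorted_map.
Qed.

Lemma index_enum_setU1 (n : nat) (x : 'I_n) (I : {set 'I_n}) :
  x \notin I -> index x (enum (x |: I)) = count (< x)%O (enum I).
Proof.
move=> xI; have xU : x \in enum (x |: I) by rewrite mem_enum setU11.
rewrite -[LHS](count_lt_nth x (sorted_enum_ord (x |: I))) ?index_mem // nth_index //.
by rewrite count_enum_setU1 //= ltxx.
Qed.

Lemma det_xcol (R : comPzRingType) (K : nat) (M : 'M[R]_K) (j1 j2 : 'I_K) :
  j1 != j2 -> \det (xcol j1 j2 M) = - \det M.
Proof.
move=> ne; rewrite xcolE det_mulmx /tperm_mx det_perm odd_tperm ne.
by rewrite expr1 mulrN1.
Qed.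

Section SeqMinor.
Variables (R : comPzRingType) (n K : nat) (A : 'M[R]_(K, n)).

Definition seqminor (s : seq 'I_n) : R :=
  \det (\matrix_(i < K, j < K) oapp (A i) 0 (nth None (map Some s) j)).

Lemma seqminor_swap p x y q : ((size p).+1 < K)%N ->
  seqminor (p ++ x :: y :: q) = - seqminor (p ++ y :: x :: q).
Proof.
move=> Hp; have H1 : (size p < K)%N by apply: ltnW.
pose j1 : 'I_K := Ordinal H1; pose j2 : 'I_K := Ordinal Hp.
have ne : j1 != j2 by apply/eqP => /(congr1 val) /=; lia.
rewrite /seqminor -(det_xcol _ ne); congr (\det _); apply/matrixP => i j.
rewrite xcolEsub !mxE; congr oapp; rewrite !map_cat !nth_cat !size_map.
case: tpermP => [->|->|n1 n2] /=; try by rewrite ltnn ltnNge leqnSn /= subnn subSnn.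
have n1' : nat_of_ord j <> size p by move=> e; apply: n1; apply: val_inj.
have n2' : nat_of_ord j <> (size p).+1 by move=> e; apply: n2; apply: val_inj.
case: ltnP => // h.
by have [k ->] : exists k, (j - size p = k.+2)%N by exists (j - size p - 2)%N; lia.
Qed.

Lemma seqminor_move p q x r : (size p + size q < K)%N ->
  seqminor (p ++ q ++ x :: r) = (-1) ^+ size q * seqminor (p ++ x :: q ++ r).
Proof.
elim: q p => [|y q IHq] p /= hK; first by rewrite expr0 mul1r.
rewrite -cat_rcons IHq ?size_rcons; last by rewrite addSnnS.
by rewrite cat_rcons seqminor_swap ?exprS ?mulN1r ?mulrN ?mulNr //; lia.
Qed.

Lemma seqminor_enum_setU1 p x (I : {set 'I_n}) : x \notin I -> (size p + #|I| < K)%N ->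
  seqminor (p ++ enum (x |: I))
  = (-1) ^+ count (< x)%O (enum I) * seqminor (p ++ x :: enum I).
Proof.
move=> xI hK; rewrite -index_enum_setU1 // -(rem_enum_setU1 xI).
have : size (enum (x |: I)) = #|I|.+1 by rewrite -cardE cardsU1 xI.
have : uniq (enum (x |: I)) := enum_uniq _.
have : x \in enum (x |: I) by rewrite mem_enum setU11.
case/splitPr => q r; rewrite cat_uniq size_cat /= => /and4P [_ /norP [xq _] _ _] sz.
rewrite index_cat (negPf xq) /= eqxx addn0 rem_cat_cons // seqminor_move //.
by apply: leq_ltn_trans hK; rewrite leq_add2l -ltnS -sz -addSnnS leq_addr.
Qed.

End SeqMinor.

Section ThreeTermPlucker.
Variables (F : fieldType) (n m : nat) (A : 'M[F]_(m.+2, n)) (r : seq 'I_n).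

Definition col2mx (u v : 'I_m.+2 -> F) : 'M[F]_m.+2 :=
  \matrix_(t, j) match nat_of_ord j with
                 | 0 => u t | 1 => v t
                 | j'.+2 => oapp (A t) 0 (nth None (map Some r) j') end.

Definition det2 u v := \det (col2mx u v).

Lemma seqminor_det2 i j : seqminor A (i :: j :: r) = det2 (A^~ i) (A^~ j).
Proof.
congr (\det _); apply/matrixP => a b; rewrite !mxE.
by case: b => [[|[|k]] hk].
Qed.

Lemma det2_ext u v u' v' : u =1 u' -> v =1 v' -> det2 u v = det2 u' v'.
Proof.
move=> eu ev; congr (\det _); apply/matrixP => a b; rewrite !mxE.
by case: b => [[|[|k]] hk] /=; rewrite ?eu ?ev.
Qed.

Let j0 : 'I_m.+2 := ord0.
Let j1 : 'I_m.+2 := lift ord0 ord0.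

Lemma det_eq_col (M : 'M[F]_m.+2) (k1 k2 : 'I_m.+2) :
  k1 != k2 -> M^T k1 =1 M^T k2 -> \det M = 0.
Proof. by move=> ne e; rewrite -det_tr; apply: (determinant_alternate ne). Qed.

Lemma det2C u v : det2 v u = - det2 u v.
Proof.
have ne : j0 != j1 by [].
rewrite /det2 -(det_xcol _ ne); congr (\det _); apply/matrixP => a b.
rewrite xcolEsub !mxE; case: tpermP => [->|->|n1 n2] //=.
case: b n1 n2 => [[|[|k]] hk] n1 n2 //=.
- by case: n1; apply: val_inj.
- by case: n2; apply: val_inj.
Qed.

Lemma det2_same u : det2 u u = 0.
Proof. by apply: (@det_eq_col _ j0 j1) => // t; rewrite !mxE. Qed.

Lemma det2_nth u k : (k < m)%N ->
  det2 u (fun t => oapp (A t) 0 (nth None (map Some r) k)) = 0.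
Proof.
move=> hk; have hk2 : (k.+2 < m.+2)%N by [].
apply: (@det_eq_col _ j1 (Ordinal hk2)) => [|t]; last by rewrite !mxE.
by apply/eqP => /(congr1 val).
Qed.

Lemma det2_expand u v : det2 u v = \sum_t v t * cofactor (col2mx u (fun _ => 0)) t j1.
Proof.
rewrite /det2 (expand_det_col _ j1); apply: eq_bigr => t _; rewrite mxE /=.
congr (_ * _); rewrite /cofactor; congr (_ * \det _); apply/matrixP => a b.
rewrite !mxE; have := neq_lift j1 b.
by case: (lift j1 b) => [[|[|k]] hk] //= ne.
Qed.

(* The defect [h v] is linear in [v] and vanishes on every column of the
   invertible matrix [col2mx u1 u2], hence everywhere. *)
Lemma det2_plucker u1 u2 u3 u4 : det2 u1 u2 != 0 ->
  det2 u1 u3 * det2 u2 u4 = det2 u1 u2 * det2 u3 u4 + det2 u1 u4 * det2 u2 u3.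
Proof.
move=> nz.
pose c u t := cofactor (col2mx u (fun _ => 0)) t j1.
pose h v := det2 u1 u3 * det2 u2 v - det2 u1 u2 * det2 u3 v - det2 u2 u3 * det2 u1 v.
pose g : 'rV[F]_m.+2 :=
  \row_t (det2 u1 u3 * c u2 t - det2 u1 u2 * c u3 t - det2 u2 u3 * c u1 t).
have hE v : h v = \sum_t v t * g 0 t.
  rewrite /h !(det2_expand _ v) !mulr_sumr -!sumrB; apply: eq_bigr => t _.
  rewrite mxE /c; ring.
have h_col j : h (fun t => col2mx u1 u2 t j) = 0.
  case: j => [[|[|k]] hk].
  - have E w : det2 w (fun t => col2mx u1 u2 t (Ordinal hk)) = det2 w u1.
      by apply: det2_ext => // t; rewrite mxE.
    by rewrite /h !E det2_same (det2C u1 u2) (det2C u1 u3); ring.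
  - have E w : det2 w (fun t => col2mx u1 u2 t (Ordinal hk)) = det2 w u2.
      by apply: det2_ext => // t; rewrite mxE.
    by rewrite /h !E det2_same (det2C u2 u3); ring.
  - have E w : det2 w (fun t => col2mx u1 u2 t (Ordinal hk)) = 0.
      by rewrite -(@det2_nth w k) //; apply: det2_ext => // t; rewrite mxE.
    by rewrite /h !E; ring.
have g_ker : g *m col2mx u1 u2 = 0.
  apply/matrixP => i j; rewrite !mxE (ord1 i) -[RHS](h_col j) hE.
  by apply: eq_bigr => t _; rewrite mulrC.
have unit12 : col2mx u1 u2 \in unitmx by rewrite unitmxE unitfE.
have g0 : g = 0 by rewrite -[g](mulmxK unit12) g_ker mul0mx.
have : h u4 = 0 by rewrite hE g0 big1 // => t _; rewrite mxE mulr0.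
by move/eqP; rewrite /h subr_eq0 subr_eq => /eqP ->; ring.
Qed.

Lemma seqminor_plucker w x y z : seqminor A (w :: x :: r) != 0 ->
  seqminor A (w :: y :: r) * seqminor A (x :: z :: r)
  = seqminor A (w :: x :: r) * seqminor A (y :: z :: r)
    + seqminor A (w :: z :: r) * seqminor A (x :: y :: r).
Proof. by rewrite !seqminor_det2; apply: det2_plucker. Qed.

End ThreeTermPlucker.

Section PminorPlucker.
Variables (R : realFieldType) (n : nat) (Rs : {set 'I_n}) (A : 'M[R]_(#|Rs|.+2, n)).

Definition ltsign (x : 'I_n) : R := (-1) ^+ count (< x)%O (enum Rs).

Lemma pminor_setU2 x y : x \notin Rs -> y \notin Rs -> (x < y)%N ->
  pminor A (x |: (y |: Rs)) = ltsign x * ltsign y * seqminor A (x :: y :: enum Rs).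
Proof.
move=> xR yR xy; have yxR : x \notin y |: Rs.
  by rewrite !inE negb_or xR andbT -val_eqE /= neq_ltn xy.
rewrite /pminor -/(seqminor A _) -[enum _]cat0s seqminor_enum_setU1 //; last first.
  by rewrite cardsU1 yR.
have yx : (y < x)%O = false by apply/negbTE; rewrite -leNgt; exact: ltnW.
by rewrite -[x :: _]cat1s seqminor_enum_setU1 // count_enum_setU1 //= yx /ltsign; ring.
Qed.

Lemma pminor_plucker w x y z :
  w \notin Rs -> x \notin Rs -> y \notin Rs -> z \notin Rs ->
  (w < x < y)%N -> (y < z)%N -> pminor A (w |: (x |: Rs)) != 0 ->
  pminor A (w |: (y |: Rs)) * pminor A (x |: (z |: Rs))
  = pminor A (w |: (x |: Rs)) * pminor A (y |: (z |: Rs))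
    + pminor A (w |: (z |: Rs)) * pminor A (x |: (y |: Rs)).
Proof.
move=> wR xR yR zR /andP [wx xy] yz.
have [wy xz] : (w < y)%N /\ (x < z)%N by split; lia.
have wz : (w < z)%N by lia.
rewrite !pminor_setU2 // mulf_eq0 negb_or => /andP [_ nz].
transitivity (ltsign w * ltsign x * ltsign y * ltsign z *
  (seqminor A [:: w, y & enum Rs] * seqminor A [:: x, z & enum Rs])); first ring.
by rewrite seqminor_plucker //; ring.
Qed.

End PminorPlucker.

(** * Faces of the convex hull of 0/1 vectors *)

Section Polytope.
Variables (R : realFieldType) (n : nat).
Implicit Types (Bs Fs : {set {set 'I_n}}) (B I P Q : {set 'I_n}) (w x : 'rV[R]_n).

Lemma dotv_evec w B : dotv w (evec R B) = \sum_(i in B) w 0 i.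
Proof.
rewrite /dotv [RHS]big_mkcond; apply: eq_bigr => i _; rewrite mxE.
by case: (i \in B); rewrite ?mulr1 ?mulr0.
Qed.

Lemma dotv_sum w Bs (c : {set 'I_n} -> R) (f : {set 'I_n} -> 'rV[R]_n) :
  dotv w (\sum_(B in Bs) c B *: f B) = \sum_(B in Bs) c B * dotv w (f B).
Proof.
rewrite /dotv; under eq_bigr do rewrite summxE mulr_sumr.
rewrite exchange_big; apply: eq_bigr => B _; rewrite mulr_sumr.
by apply: eq_bigr => i _; rewrite mxE mulrCA.
Qed.

Lemma sum_mem_set B I : \sum_(i in B) ((i \in I)%:R : R) = #|B :&: I|%:R.
Proof.
rewrite -sum1_card natr_sum big_mkcond [RHS]big_mkcond; apply: eq_bigr => i _.
by rewrite inE; case: (i \in B); case: (i \in I).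
Qed.

Definition face_weight P Q : 'rV[R]_n :=
  \row_i ((i \in P)%:R - (i \notin P :|: Q)%:R).

Lemma dotv_face_weight P Q B :
  dotv (face_weight P Q) (evec R B) = #|B :&: P|%:R - #|B :\: (P :|: Q)|%:R.
Proof.
rewrite dotv_evec; under eq_bigr do rewrite mxE.
rewrite sumrB sum_mem_set setDE -(sum_mem_set B (~: (P :|: Q))).
by congr (_ - _); apply: eq_bigr => i _; rewrite in_setC.
Qed.

Lemma dotv_face_weight_le P Q B : dotv (face_weight P Q) (evec R B) <= #|P|%:R.
Proof.
rewrite dotv_face_weight lerBlDr -natrD ler_nat.
by have := subset_leq_card (subsetIr B P); lia.
Qed.

Lemma dotv_face_weight_eq P Q B :
  (dotv (face_weight P Q) (evec R B) == #|P|%:R) = (P \subset B) && (B \subset P :|: Q).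
Proof.
rewrite dotv_face_weight subr_eq -natrD eqr_nat.
have le := subset_leq_card (subsetIr B P).
have -> : (#|B :&: P| == (#|P| + #|B :\: (P :|: Q)|)%N) =
          (#|B :&: P| == #|P|) && (#|B :\: (P :|: Q)| == 0%N) by lia.
rewrite cards_eq0 setD_eq0; congr andb.
apply/eqP/idP => [h|/setIidPr -> //].
by apply/setIidPr/eqP; rewrite eqEcard subsetIr h leqnn.
Qed.

Lemma sum_subset_mkcond (V : zmodType) Fs Bs (f : {set 'I_n} -> V) : Fs \subset Bs ->
  \sum_(B in Fs) f B = \sum_(B in Bs) (if B \in Fs then f B else 0).
Proof.
move=> sub; rewrite [RHS]big_mkcond [LHS]big_mkcond; apply: eq_bigr => B _.
by case BF: (B \in Fs); rewrite ?(subsetP sub B BF) //; case: (B \in Bs).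
Qed.

Lemma in_conv_evec Bs B : B \in Bs -> in_conv Bs (evec R B).
Proof.
move=> BBs; exists [ffun B' => (B' == B)%:R]; split.
- by move=> B'; rewrite ffunE ler0n.
- rewrite (bigD1 B) //= big1 => [|B' /andP [_ /negPf ne]]; last by rewrite ffunE ne.
  by rewrite ffunE eqxx addr0.
- rewrite (bigD1 B) //= big1 => [|B' /andP [_ /negPf ne]]; last by rewrite ffunE ne scale0r.
  by rewrite ffunE eqxx scale1r addr0.
Qed.

Lemma in_conv_dotv_le Bs w c x : in_conv Bs x ->
  (forall B, B \in Bs -> dotv w (evec R B) <= c) -> dotv w x <= c.
Proof.
case=> l [l0 l1 ->] le; rewrite dotv_sum.
apply: (@le_trans _ _ (\sum_(B in Bs) l B * c)); last by rewrite -mulr_suml l1 mul1r.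
by apply: ler_sum => B BBs; apply: ler_wpM2l; rewrite ?l0 ?le.
Qed.

Lemma conv_weight_eq0 Bs (l : {ffun {set 'I_n} -> R}) w c :
  (forall B, 0 <= l B) -> \sum_(B in Bs) l B = 1 ->
  (forall B, B \in Bs -> dotv w (evec R B) <= c) ->
  dotv w (\sum_(B in Bs) l B *: evec R B) = c ->
  forall B, B \in Bs -> dotv w (evec R B) < c -> l B = 0.
Proof.
move=> l0 l1 le eq.
have gap0 : \sum_(B in Bs) l B * (c - dotv w (evec R B)) = 0.
  under eq_bigr do rewrite mulrBr.
  by rewrite sumrB -dotv_sum eq -mulr_suml l1 mul1r subrr.
have /psumr_eq0P gaps0 : forall B, B \in Bs -> 0 <= l B * (c - dotv w (evec R B)).
  by move=> B BBs; rewrite mulr_ge0 // subr_ge0 le.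
move=> B BBs lt; have /eqP := gaps0 gap0 B BBs.
by rewrite mulf_eq0 subr_eq0 (gt_eqF lt) orbF => /eqP.
Qed.

Lemma in_conv_evec_mem Bs I : in_conv Bs (evec R I) -> I \in Bs.
Proof.
case=> l [l0 l1 e]; apply/negPn/negP => nI.
suff l_eq0 : forall B, B \in Bs -> l B = 0.
  by move: l1; rewrite big1 // => /eqP; rewrite eq_sym oner_eq0.
move=> B BBs; apply: (conv_weight_eq0 (w := face_weight I set0) (c := #|I|%:R) l0 l1) => //.
- by move=> B' _; apply: dotv_face_weight_le.
- by rewrite -e; apply/eqP; rewrite dotv_face_weight_eq setU0 !subxx.
rewrite lt_neqAle dotv_face_weight_le andbT dotv_face_weight_eq setU0 -eqEsubset.
by apply: contraNneq nI => ->.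
Qed.

Lemma in_conv_inj Bs Bs' : (forall x, in_conv Bs x <-> in_conv Bs' x) -> Bs = Bs'.
Proof.
move=> eq; apply/setP => B; apply/idP/idP => BB; apply: in_conv_evec_mem.
  by apply/eq/in_conv_evec.
by apply/eq/in_conv_evec.
Qed.

Lemma in_conv_subset Fs Bs x : Fs \subset Bs -> in_conv Fs x -> in_conv Bs x.
Proof.
move=> sub [l [l0 l1 ->]]; exists [ffun B => if B \in Fs then l B else 0]; split.
- by move=> B; rewrite ffunE; case: ifP.
- by rewrite -l1 (sum_subset_mkcond _ sub); apply: eq_bigr => B _; rewrite ffunE.
- rewrite (sum_subset_mkcond _ sub); apply: eq_bigr => B _; rewrite ffunE.
  by case: ifP; rewrite ?scale0r.
Qed.

Definition interval_bases Bs P Q := [set B in Bs | (P \subset B) && (B \subset P :|: Q)].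

Lemma interval_face Bs P Q : interval_bases Bs P Q != set0 ->
  is_face (matroid_polytope (R := R) Bs) (in_conv (R := R) (interval_bases Bs P Q)).
Proof.
set Fs := interval_bases Bs P Q => /set0Pn [B0 B0F].
have sub : Fs \subset Bs by apply/subsetP => B; rewrite inE => /andP [].
have le_max B : B \in Bs -> dotv (face_weight P Q) (evec R B) <= #|P|%:R.
  by move=> _; apply: dotv_face_weight_le.
have eq_max B : B \in Fs -> dotv (face_weight P Q) (evec R B) = #|P|%:R.
  by rewrite inE => /andP [_ ?]; apply/eqP; rewrite dotv_face_weight_eq.
exists (face_weight P Q) => x; split.
- move=> xF; split; first exact: in_conv_subset sub xF.
  move=> y yP; rewrite (_ : dotv _ x = #|P|%:R); first exact: in_conv_dotv_le yP le_max.
  case: xF => l [_ l1 ->]; rewrite dotv_sum (eq_bigr (fun B => l B * #|P|%:R)).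
    by rewrite -mulr_suml l1 mul1r.
  by move=> B /eq_max ->.
- case=> [[l [l0 l1 ex]] hmax].
  have dx : dotv (face_weight P Q) x = #|P|%:R.
    apply/le_anti/andP; split; first by apply: in_conv_dotv_le le_max; exists l.
    by rewrite -(eq_max B0 B0F); apply/hmax/in_conv_evec; rewrite (subsetP sub).
  have l_eq0 B : B \in Bs -> B \notin Fs -> l B = 0.
    move=> BB nF; apply: (conv_weight_eq0 (c := #|P|%:R) l0 l1 le_max) => //.
      by rewrite -ex.
    by rewrite lt_neqAle le_max // andbT dotv_face_weight_eq; move: nF; rewrite inE BB.
  exists l; split => //.
  + rewrite -l1 (sum_subset_mkcond _ sub); apply: eq_bigr => B BB.
    by case: ifP => // /negbT nF; rewrite l_eq0.
  + rewrite ex (sum_subset_mkcond _ sub); apply: eq_bigr => B BB.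
    by case: ifP => // /negbT nF; rewrite l_eq0 ?scale0r.
Qed.

End Polytope.

(** * The crossing square is not a positroid polytope *)

Definition square_bases (n : nat) (Rs : {set 'I_n}) (a b c d : 'I_n) :=
  [set a |: (b |: Rs); a |: (d |: Rs); b |: (c |: Rs); c |: (d |: Rs)].

Lemma square_basesC n (Rs : {set 'I_n}) a b c d :
  square_bases Rs a b c d = square_bases Rs b c d a.
Proof.
rewrite /square_bases (setUCA [set b] [set a]) (setUCA [set d] [set a]).
apply/setP => X; rewrite !inE.
by case: (X == _); case: (X == _); case: (X == _); case: (X == _).
Qed.

Lemma notin_setU2 (T : finType) (x y z : T) (Rs : {set T}) :
  z \notin Rs -> z != x -> z != y -> z \notin x |: (y |: Rs).
Proof. by move=> zR zx zy; rewrite !inE negb_or zx negb_or zy. Qed.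

(* The three-term Plucker relation [p_ac p_bd = p_ab p_cd + p_ad p_bc] with
   [p_ab, p_bc, p_cd, p_ad > 0] forces [p_ac != 0]: the diagonal [a c] would be
   a further basis. *)
Lemma sorted_square_not_positroid (R : realFieldType) n (Rs : {set 'I_n}) a b c d :
  a \notin Rs -> b \notin Rs -> c \notin Rs -> d \notin Rs ->
  (a < b < c)%N -> (c < d)%N ->
  ~ is_positroid_polytope (in_conv (R := R) (square_bases Rs a b c d)).
Proof.
move=> aR bR cR dR abc cd [k [Bs [[A [_ minor_ge0 eqBs] polyBs]]]].
have [[ca cb c_d] [a_b ac a_d]] :
    [/\ c != a, c != b & c != d] /\ [/\ a != b, a != c & a != d].
  by move: abc; rewrite -!val_eqE /=; split; split; lia.
have Bs_square : Bs = square_bases Rs a b c d by apply: in_conv_inj.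
have card_pair x y : x \notin Rs -> y \notin Rs -> x != y -> #|x |: (y |: Rs)| = #|Rs|.+2.
  by move=> xR yR xy; rewrite !cardsU1 !inE negb_or xy xR yR.
have ek : k = #|Rs|.+2.
  have : a |: (b |: Rs) \in Bs by rewrite Bs_square !inE eqxx.
  by rewrite eqBs inE card_pair // => /andP [/eqP].
subst k.
have minor_gt0 x y : x |: (y |: Rs) \in square_bases Rs a b c d -> 0 < pminor A (x |: (y |: Rs)).
  by rewrite -Bs_square eqBs inE => /andP [/eqP card nz]; rewrite lt_def nz minor_ge0.
have p_ab : 0 < pminor A (a |: (b |: Rs)) by apply: minor_gt0; rewrite !inE eqxx.
have p_ad : 0 < pminor A (a |: (d |: Rs)) by apply: minor_gt0; rewrite !inE eqxx !orbT.
have p_bc : 0 < pminor A (b |: (c |: Rs)) by apply: minor_gt0; rewrite !inE eqxx !orbT.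
have p_cd : 0 < pminor A (c |: (d |: Rs)) by apply: minor_gt0; rewrite !inE eqxx !orbT.
have ac_notin : a |: (c |: Rs) \notin square_bases Rs a b c d.
  have [cU aU] : c \in a |: (c |: Rs) /\ a \in a |: (c |: Rs) by rewrite !inE !eqxx orbT.
  rewrite !inE -!orbA; apply/negP => /or4P [] /eqP E; move: cU aU; rewrite E.
  - by rewrite (negPf (notin_setU2 cR ca cb)).
  - by rewrite (negPf (notin_setU2 cR ca c_d)).
  - by rewrite (negPf (notin_setU2 aR a_b ac)).
  - by rewrite (negPf (notin_setU2 aR ac a_d)).
have p_ac : pminor A (a |: (c |: Rs)) = 0.
  apply/eqP; move: ac_notin; apply: contraNT => nz.
  by rewrite -Bs_square eqBs inE card_pair // eqxx nz.
have := pminor_plucker (A := A) aR bR cR dR abc cd (lt0r_neq0 p_ab).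
rewrite p_ac mul0r => /eqP; rewrite eq_sym paddr_eq0 ?mulr_ge0 ?ltW // => /andP [].
by rewrite mulf_eq0 (gt_eqF p_ab) (gt_eqF p_cd).
Qed.

Lemma square_not_positroid (R : realFieldType) n (Rs : {set 'I_n}) a b c d :
  cyclic_order a b c d -> [disjoint Rs & [set a; b; c; d]] ->
  ~ is_positroid_polytope (in_conv (R := R) (square_bases Rs a b c d)).
Proof.
move=> cyc dis.
have [aR bR cR dR] : [/\ a \notin Rs, b \notin Rs, c \notin Rs & d \notin Rs].
  by split; apply/negbT/(disjointFl dis); rewrite !inE eqxx ?orbT.
case/or4P: cyc => /and3P [h1 h2 h3].
- by apply: sorted_square_not_positroid => //; apply/andP.
- by rewrite square_basesC; apply: sorted_square_not_positroid => //; apply/andP.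
- rewrite square_basesC (square_basesC _ b).
  by apply: sorted_square_not_positroid => //; apply/andP.
- rewrite -(square_basesC _ d).
  by apply: sorted_square_not_positroid => //; apply/andP.
Qed.

(** * The basis-exchange graph of a matroid *)

Section ExchangeGraph.
Variables (n : nat) (E : {set 'I_n}) (Bs : {set {set 'I_n}}).

Definition exchangeable : rel 'I_n := fun x y =>
  [exists B in Bs, [&& x \in B, y \notin B & y |: (B :\ x) \in Bs]].

Lemma exchangeableP x y :
  reflect (exists2 B, B \in Bs & [/\ x \in B, y \notin B & y |: (B :\ x) \in Bs])
          (exchangeable x y).
Proof.
apply: (iffP existsP) => [[B /and4P [BBs xB yB yBs]]|[B BBs [xB yB yBs]]].
  by exists B.
by exists B; rewrite BBs xB yB yBs.
Qed.

Lemma exchangeable_sym x y : exchangeable x y -> exchangeable y x.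
Proof.
move/exchangeableP => [B BBs [xB yB yBs]]; apply/exchangeableP.
exists (y |: (B :\ x)) => //; have xy : x != y by apply: contraNneq yB => <-.
split; rewrite ?inE ?eqxx ?(negPf xy) //.
suff -> : x |: ((y |: (B :\ x)) :\ y) = B by [].
apply/setP => z; rewrite !inE; case: (eqVneq z x) => [->|zx] //=.
by case: (eqVneq z y) => [->|zy] //=; rewrite (negPf yB).
Qed.

Lemma exchangeable_neq x y : exchangeable x y -> x != y.
Proof. by case/exchangeableP => B _ [xB yB _]; apply: contraNneq yB => <-. Qed.

Hypothesis matroidBs : is_matroid E Bs.

Lemma exchangeable_mem x y : exchangeable x y -> (x \in E) && (y \in E).
Proof.
case: matroidBs => _ [sub _] /exchangeableP [B BBs [xB yB yBs]].
by rewrite (subsetP (sub _ BBs) _ xB) (subsetP (sub _ yBs)) // !inE eqxx.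
Qed.

Section ClosedSide.
Variable D : {set 'I_n}.
Hypothesis closedD : forall u v, exchangeable u v -> (u \in D) = (v \in D).
Let D' := E :\: D.

Lemma mix_bases_id B B' : B \in Bs -> B' \in Bs -> B :&: D' \subset B' ->
  (B :&: D) :|: (B' :&: D') = B.
Proof.
case: matroidBs => _ [sub ex] BBs B'Bs BD'B'.
have B'D'B : B' :&: D' \subset B.
  apply/subsetP => x xB'D'; apply/negPn/negP => xB.
  have [xB' xD'] : x \in B' /\ x \in D' by move: xB'D'; rewrite inE => /andP.
  have xB'B : x \in B' :\: B by rewrite inE xB xB'.
  have [y /setDP [yB yB'] yBs] := ex _ _ B'Bs BBs x xB'B.
  have exy : exchangeable x y by apply/exchangeableP; exists B'.
  have yD' : y \in D'.
    by move: xD'; rewrite !inE -(closedD exy) (subsetP (sub _ BBs) y yB) andbT => /andP [].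
  by move: yB' => /negP; apply; apply: (subsetP BD'B'); rewrite inE yB.
have -> : B' :&: D' = B :&: D'.
  by apply/eqP; rewrite eqEsubset !subsetI B'D'B BD'B' !subsetIr.
rewrite -setIUr; apply/setIidPl/(subset_trans (sub _ BBs)).
by apply/subsetP => z zE; rewrite !inE zE andbT orbN.
Qed.

Lemma mix_bases B B' : B \in Bs -> B' \in Bs -> (B :&: D) :|: (B' :&: D') \in Bs.
Proof.
case: matroidBs => _ [sub ex]; move=> BBs B'Bs.
elim: {B}_.+1 {-2}B (ltnSn #|(B :&: D') :\: B'|) BBs => // m IHm B.
case: (set_0Vmem ((B :&: D') :\: B')) => [e0 _ BBs|[x xBD'B'] hm BBs].
  by rewrite mix_bases_id // -setD_eq0 e0.
move/setDP: (xBD'B') => [/setIP [xB xD'] xB'].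
have xBB' : x \in B :\: B' by apply/setDP.
have [y /setDP [yB' yB] yBs] := ex _ _ BBs B'Bs x xBB'.
have exy : exchangeable x y by apply/exchangeableP; exists B.
have [xD yD] : x \notin D /\ y \notin D.
  by move: xD'; rewrite inE -(closedD exy) => /andP [].
have -> : B :&: D = (y |: (B :\ x)) :&: D.
  apply/setP => z; rewrite !inE; case: (eqVneq z y) => [->|_]; first by rewrite (negPf yD) andbF.
  by case: (eqVneq z x) => [->|//]; rewrite (negPf xD) andbF.
apply: IHm yBs; rewrite -ltnS (leq_trans _ hm) // ltnS.
rewrite (cardsD1 x ((B :&: D') :\: B')) xBD'B' ltnS.
apply: subset_leq_card; apply/subsetP => z; rewrite !inE; case: (eqVneq z y) => [->|_ /=].
  by rewrite yB'.
by case/and4P=> -> /andP [-> ->] -> ->.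
Qed.

End ClosedSide.

Definition restr_bases (D : {set 'I_n}) := [set B :&: D | B in Bs].

Lemma restr_bases_matroid (D D' : {set 'I_n}) :
  (forall B B', B \in Bs -> B' \in Bs -> (B :&: D) :|: (B' :&: D') \in Bs) ->
  (forall u v, exchangeable u v -> u \in D -> v \in D) -> [disjoint D & D'] ->
  is_matroid D (restr_bases D).
Proof.
move=> mixBs closedD disDD'; case: matroidBs => [ne [sub ex]]; split; [|split].
- by case/set0Pn: ne => B0 B0Bs; apply/set0Pn; exists (B0 :&: D); apply: imset_f.
- by move=> X /imsetP [B _ ->]; apply: subsetIr.
move=> X1 X2 /imsetP [B1 B1Bs ->] /imsetP [B2 B2Bs ->] x.
move/setDP => [/setIP [xB1 xD] xn].
have xB2 : x \notin B2 by apply: contra xn => xB2; apply/setIP.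
set C := (B1 :&: D) :|: (B2 :&: D').
have CBs : C \in Bs by apply: mixBs.
have xC : x \in C :\: B2 by rewrite !inE xB1 xD xB2.
have [y /setDP [yB2 yC] yCBs] := ex _ _ CBs B2Bs x xC.
have exy : exchangeable x y by apply/exchangeableP; exists C; case/setDP: xC.
have yD := closedD _ _ exy xD.
exists y; first by rewrite !inE yD yB2 !andbT; apply: contra yC => yB1; rewrite !inE yB1 yD.
apply/imsetP; exists (y |: (C :\ x)) => //; apply/setP => z; rewrite !inE.
case: (eqVneq z y) => [->|zy] /=; first by rewrite yD.
case zD : (z \in D); last by rewrite !andbF.
by rewrite (disjointFr disDD' zD) !andbF !orbF !andbT.
Qed.

Lemma closed_decomposition (D : {set 'I_n}) :
  (forall u v, exchangeable u v -> (u \in D) = (v \in D)) -> D \subset E ->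
  [/\ is_matroid D (restr_bases D), is_matroid (E :\: D) (restr_bases (E :\: D))
    & Bs = direct_sum (restr_bases D) (restr_bases (E :\: D))].
Proof.
move=> closedD DE; case: (matroidBs) => _ [sub _]; split.
- apply: (@restr_bases_matroid D (E :\: D)); first exact: mix_bases.
    by move=> u v /closedD ->.
  by rewrite disjoints_subset; apply/subsetP => z zD; rewrite !inE zD.
- apply: (@restr_bases_matroid (E :\: D) D).
  + by move=> B B' BBs B'Bs; rewrite setUC; apply: mix_bases.
  + move=> u v exuv; rewrite !inE (closedD _ _ exuv) => /andP [-> _].
    by case/andP: (exchangeable_mem exuv).
  by rewrite disjoints_subset; apply/subsetP => z; rewrite !inE => /andP [].
apply/setP => B; apply/idP/imset2P => [BBs|[_ _ /imsetP [B1 B1Bs ->] /imsetP [B2 B2Bs ->] ->]].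
  exists (B :&: D) (B :&: (E :\: D)); try by apply: imset_f.
  apply/setP => z; rewrite !inE; have := subsetP (sub _ BBs) z.
  by case: (z \in B); case: (z \in D); case: (z \in E) => // /(_ isT).
exact: mix_bases.
Qed.

End ExchangeGraph.

(* The elements exchange-connected to [a] form a side of a direct-sum
   decomposition, which must then be trivial. *)
Lemma connected_matroid_connect n (E : {set 'I_n}) Bs a c :
  connected_matroid E Bs -> a \in E -> c \in E -> connect (exchangeable Bs) a c.
Proof.
move=> [matroidBs indec] aE cE; apply/negPn/negP => nac.
pose D := [set x in E | connect (exchangeable Bs) a x].
have closedD u v : exchangeable Bs u v -> (u \in D) = (v \in D).
  move=> exuv; rewrite !inE; case/andP: (exchangeable_mem matroidBs exuv) => -> ->.
  apply/idP/idP => h; first exact: connect_trans h (connect1 exuv).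
  exact: connect_trans h (connect1 (exchangeable_sym exuv)).
have DE : D \subset E by apply/subsetP => z; rewrite inE => /andP [].
apply: indec; exists D, (E :\: D), (restr_bases Bs D), (restr_bases Bs (E :\: D)); split.
- by apply/set0Pn; exists a; rewrite inE aE connect0.
- by apply/set0Pn; exists c; rewrite !inE cE andbT nac.
- by rewrite disjoints_subset; apply/subsetP => z zD; rewrite in_setC in_setD zD.
- by rewrite -{1}(setIidPr DE) setID.
- by case: (closed_decomposition matroidBs closedD DE).
Qed.

(** * A square face of a disconnected matroid polytope *)

Lemma connect_switch (T : finType) (e : rel T) (P : pred T) a c :
  connect e a c -> P a != P c -> exists u v, e u v /\ P u != P v.
Proof.
move/connectP => [p pth ->]; elim: p a pth => [|y p IHp] a /=; first by rewrite eqxx.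
case/andP => ay pth; case: (eqVneq (P a) (P y)) => [-> | ne _]; first exact: IHp.
by exists a, y.
Qed.

Definition between n (u v z : 'I_n) : bool := (minn u v < z < maxn u v)%N.

Lemma cyclic_order_neq n (a b c d : 'I_n) : cyclic_order a b c d ->
  [/\ a != b, a != c, a != d, b != c & [/\ b != d & c != d]].
Proof.
rewrite /cyclic_order => /or4P [] /and3P [h1 h2 h3].
all: by rewrite -!val_eqE /=; repeat split; apply/eqP; lia.
Qed.

Lemma cyclic_order_between n (a b c d : 'I_n) :
  cyclic_order a b c d -> between b d a != between b d c.
Proof.
rewrite /cyclic_order /between => /or4P [] /and3P [h1 h2 h3].
all: by apply/negP => /eqP; lia.
Qed.

Section Crossing.
Variables (n : nat) (u v x y : 'I_n).
Hypothesis neq : [/\ u != v, x != y & [/\ u != x, u != y, v != x & v != y]].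

Lemma between_sym : between u v x != between u v y -> between x y u != between x y v.
Proof.
case: neq; rewrite -!val_eqE /= /between => /eqP ? /eqP ? [/eqP ? /eqP ? /eqP ? /eqP ?].
by move=> /eqP h; apply/negP => /eqP h'; lia.
Qed.

Lemma between_cyclic_order :
  between u v x != between u v y -> cyclic_order u x v y \/ cyclic_order u y v x.
Proof.
case: neq; rewrite -!val_eqE /= /between /cyclic_order.
move=> /eqP ? /eqP ? [/eqP ? /eqP ? /eqP ? /eqP ?] /eqP h.
case: (ltngtP u v) => uv; last lia.
all: case: (ltnP x u) => xu; case: (ltnP x v) => xv; case: (ltnP y u) => yu; case: (ltnP y v) => yv.
all: try (left; apply/or4P; lia); try (right; apply/or4P; lia); lia.
Qed.

End Crossing.

(* An exchange [u v] of the first summand separating [b] from [d] exists on a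
   path from [a] to [c]; an exchange [x y] of the second one separating [u]
   from [v] exists on a path from [b] to [d]. *)
Lemma crossing_exchanges n (S : {set 'I_n}) Bs1 Bs2 a b c d :
  connected_matroid S Bs1 -> connected_matroid (~: S) Bs2 ->
  [/\ cyclic_order a b c d, a \in S, c \in S, b \in ~: S & d \in ~: S] ->
  exists u v x y,
    [/\ exchangeable Bs1 u v, exchangeable Bs2 x y & cyclic_order u x v y].
Proof.
move=> M1 M2 [cyc aS cS bT dT].
have neqST z t : z \in S -> t \in ~: S -> z != t.
  by move=> zS; rewrite inE; apply: contra => /eqP <-.
have [u [v [exuv sep_uv]]] :=
  connect_switch (connected_matroid_connect M1 aS cS) (cyclic_order_between cyc).
have /andP [uS vS] := exchangeable_mem M1.1 exuv.
have [_ _ _ _ [bd _]] := cyclic_order_neq cyc.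
have sep_bd : between u v b != between u v d.
  apply: between_sym sep_uv; split; [exact: bd | exact: exchangeable_neq exuv |].
  by split; rewrite eq_sym neqST.
have [x [y [exxy sep_xy]]] :=
  connect_switch (connected_matroid_connect M2 bT dT) sep_bd.
have /andP [xT yT] := exchangeable_mem M2.1 exxy.
have [] := @between_cyclic_order _ u v x y _ sep_xy.
- split; [exact: exchangeable_neq exuv | exact: exchangeable_neq exxy |].
  by split; rewrite neqST.
- by move=> cyc'; exists u, v, x, y.
- by move=> cyc'; exists u, v, y, x; split; rewrite // exchangeable_sym.
Qed.

Lemma cardsU_disjoint (T : finType) (X Y : {set T}) :
  [disjoint X & Y] -> #|X :|: Y| = (#|X| + #|Y|)%N.
Proof. by move=> dXY; rewrite cardsU (disjoint_setI0 dXY) cards0 subn0. Qed.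

Lemma disjoint_sides (T : finType) (S X Y : {set T}) :
  X \subset S -> Y \subset ~: S -> [disjoint X & Y].
Proof.
move=> XS YT; rewrite disjoint_sym; apply: disjointWr XS _.
by rewrite -[S]setCK -subsets_disjoint.
Qed.

Lemma setUI_side (T : finType) (S X Y : {set T}) :
  X \subset S -> Y \subset ~: S -> (X :|: Y) :&: S = X.
Proof.
move=> XS YT; rewrite setIUl (setIidPl XS) disjoint_setI0 ?setU0 //.
by rewrite disjoint_sym (disjoint_sides (subxx S)).
Qed.

Lemma subset_setU2_card (T : finType) (X Rr : {set T}) (p q : T) :
  Rr \subset X -> X \subset p |: (q |: Rr) -> #|X| = #|Rr|.+1 ->
  X = p |: Rr \/ X = q |: Rr.
Proof.
move=> RX Xpq cX; have : X :\: Rr != set0.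
  by rewrite setD_eq0; apply/negP => /subset_leq_card; rewrite cX ltnn.
case/set0Pn => z /setDP [zX zR].
have -> : X = z |: Rr.
  by apply/esym/eqP; rewrite eqEcard subUset sub1set zX RX cX cardsU1 zR add1n ltnSn.
by have := subsetP Xpq z zX; rewrite !inE (negPf zR) orbF => /orP [] /eqP ->; [left|right].
Qed.

Lemma side_subset_setU2 (T : finType) (S X Y R R' Z : {set T}) (p q : T) :
  X \subset S -> Y \subset ~: S -> R \subset S -> R' \subset ~: S ->
  p |: (q |: R) \subset S -> Z \subset ~: S ->
  R :|: R' \subset X :|: Y -> X :|: Y \subset (p |: (q |: R)) :|: Z ->
  #|X| = #|R|.+1 -> X = p |: R \/ X = q |: R.
Proof.
move=> XS YT RS R'T PS ZT sub_lo sub_hi; apply: subset_setU2_card.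
  by rewrite -(setUI_side RS R'T) -(setUI_side XS YT) setSI.
by rewrite -(setUI_side XS YT) -(setUI_side PS ZT) setSI.
Qed.

Lemma setU1U1 (T : finType) (x y : T) (X Y : {set T}) :
  (x |: X) :|: (y |: Y) = x |: (y |: (X :|: Y)).
Proof. by rewrite setUACA -setUA setUCA. Qed.

Section SquareFace.
Variables (n k : nat) (S : {set 'I_n}) (Bs Bs1 Bs2 : {set {set 'I_n}}).
Hypotheses (card_bases : forall B, B \in Bs -> #|B| = k) (Bs_sum : Bs = direct_sum Bs1 Bs2)
  (sub1 : forall B, B \in Bs1 -> B \subset S) (sub2 : forall B, B \in Bs2 -> B \subset ~: S).
Variables (a b c d : 'I_n) (R1 R2 : {set 'I_n}).
Hypotheses (aR1 : a \notin R1) (cR1 : c \notin R1) (aB : a |: R1 \in Bs1) (cB : c |: R1 \in Bs1)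
  (bR2 : b \notin R2) (dR2 : d \notin R2) (bB : b |: R2 \in Bs2) (dB : d |: R2 \in Bs2).

Let R1S : R1 \subset S.
Proof. exact: subset_trans (subsetUr _ _) (sub1 aB). Qed.
Let R2T : R2 \subset ~: S.
Proof. exact: subset_trans (subsetUr _ _) (sub2 bB). Qed.

Lemma sum_bases_setU2 x y : x |: R1 \in Bs1 -> y |: R2 \in Bs2 ->
  x |: (y |: (R1 :|: R2)) \in Bs.
Proof. by move=> xB yB; rewrite Bs_sum -setU1U1; apply: imset2_f. Qed.

Lemma card_sum_bases B1 B2 : B1 \in Bs1 -> B2 \in Bs2 -> (#|B1| + #|B2| = k)%N.
Proof.
move=> B1Bs B2Bs; rewrite -cardsU_disjoint ?(disjoint_sides (sub1 B1Bs) (sub2 B2Bs)) //.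
by apply: card_bases; rewrite Bs_sum; apply: imset2_f.
Qed.

Lemma card_R1R2 : #|R1 :|: R2| = (k - 2)%N.
Proof.
rewrite cardsU_disjoint ?(disjoint_sides R1S R2T) //.
by have := card_sum_bases aB bB; rewrite !cardsU1 aR1 bR2 !add1n; lia.
Qed.

Lemma disjoint_R1R2 : [disjoint R1 :|: R2 & [set a; b; c; d]].
Proof.
have notR2 x : x |: R1 \in Bs1 -> x \notin R2.
  by move=> xB; apply/negbT/(disjointFr (disjoint_sides (sub1 xB) R2T)); rewrite setU11.
have notR1 x : x |: R2 \in Bs2 -> x \notin R1.
  by move=> xB; apply/negbT/(disjointFl (disjoint_sides R1S (sub2 xB))); rewrite setU11.
rewrite disjoint_sym disjoints_subset; apply/subsetP => z.
rewrite !inE -!orbA negb_or => /or4P [] /eqP ->.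
- by rewrite aR1 notR2.
- by rewrite bR2 notR1.
- by rewrite cR1 notR2.
- by rewrite dR2 notR1.
Qed.

Lemma interval_square :
  interval_bases Bs (R1 :|: R2) [set a; b; c; d] = square_bases (R1 :|: R2) a b c d.
Proof.
have acS : a |: (c |: R1) \subset S.
  by rewrite !subUset !sub1set R1S andbT (subsetP (sub1 aB)) ?(subsetP (sub1 cB)) ?setU11.
have bdT : b |: (d |: R2) \subset ~: S.
  by rewrite !subUset !sub1set R2T andbT (subsetP (sub2 bB)) ?(subsetP (sub2 dB)) ?setU11.
have Q_split : (R1 :|: R2) :|: [set a; b; c; d] = (a |: (c |: R1)) :|: (b |: (d |: R2)).
  apply/setP => z; rewrite !inE.
  by case: (z == a); case: (z == b); case: (z == c); case: (z == d); rewrite ?orbT ?orbF.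
apply/setP => B; rewrite inE Q_split; apply/andP/idP => [[BBs /andP [lo hi]]|].
  move: BBs; rewrite Bs_sum => /imset2P [B1 B2 B1Bs B2Bs eB]; subst B.
  have cardB1 : #|B1| = #|R1|.+1.
    apply/(@addIn #|b |: R2|).
    by rewrite (card_sum_bases B1Bs bB) -(card_sum_bases aB bB) (cardsU1 a) aR1.
  have cardB2 : #|B2| = #|R2|.+1.
    apply/(@addnI #|a |: R1|).
    by rewrite (card_sum_bases aB B2Bs) -(card_sum_bases aB bB) (cardsU1 b) bR2.
  have side1 := side_subset_setU2 (sub1 B1Bs) (sub2 B2Bs) R1S R2T acS bdT lo hi cardB1.
  have side2 : B2 = b |: R2 \/ B2 = d |: R2.
    apply: (side_subset_setU2 (Y := B1) (R' := R1) (Z := a |: (c |: R1)) (sub2 B2Bs) _ R2T _ bdT);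
      rewrite ?setCK ?(sub1 B1Bs) // ?[R2 :|: _]setUC ?[B2 :|: _]setUC //.
    by rewrite [_ :|: (a |: _)]setUC.
  case: side1 => ->; case: side2 => ->; rewrite setU1U1 !inE ?eqxx ?orbT //.
  by rewrite setUCA eqxx !orbT.
rewrite !inE -!orbA => /or4P [] /eqP ->; (split; [|apply/andP; split]).
all: try (by apply: sum_bases_setU2); try (by rewrite setUCA; apply: sum_bases_setU2).
all: apply/subsetP => z; rewrite !inE => h; repeat (case/orP: h => h); by rewrite h ?orbT.
Qed.

Lemma square_face (R : realFieldType) : cyclic_order a b c d ->
  [/\ #|R1 :|: R2| = (k - 2)%N, [disjoint R1 :|: R2 & [set a; b; c; d]] &
    let F := in_conv (R := R) (square_bases (R1 :|: R2) a b c d) in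
    is_face (matroid_polytope (R := R) Bs) F /\ ~ is_positroid_polytope F].
Proof.
move=> cyc; split=> //; [exact: card_R1R2 | exact: disjoint_R1R2 | split].
- rewrite -interval_square; apply: interval_face; rewrite interval_square.
  by apply/set0Pn; exists (a |: (b |: (R1 :|: R2))); rewrite !inE eqxx.
- exact: square_not_positroid cyc disjoint_R1R2.
Qed.

End SquareFace.

Theorem lemma3p5 (R : realFieldType) (n k : nat) (Bs : {set {set 'I_n}}) (S : {set 'I_n}) :
  is_matroid [set: 'I_n] Bs ->
  (forall B, B \in Bs -> #|B| = k) ->
  S != set0 -> ~: S != set0 ->
  (exists Bs1 Bs2, [/\ connected_matroid S Bs1, connected_matroid (~: S) Bs2 &
                       Bs = direct_sum Bs1 Bs2]) ->
  (exists a b c d : 'I_n,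
     [/\ cyclic_order a b c d, a \in S, c \in S, b \in ~: S & d \in ~: S]) ->
  exists (a b c d : 'I_n) (Rs : {set 'I_n}),
    [/\ cyclic_order a b c d, a \in S, c \in S, b \in ~: S & d \in ~: S] /\
    [/\ #|Rs| = (k - 2)%N, [disjoint Rs & [set a; b; c; d]] &
      let Fb := [set a |: (b |: Rs); a |: (d |: Rs); b |: (c |: Rs); c |: (d |: Rs)] in
      is_face (matroid_polytope (R := R) Bs) (in_conv (R := R) Fb) /\
      ~ is_positroid_polytope (in_conv (R := R) Fb)].
Proof.
move=> _ card_bases _ _ [Bs1 [Bs2 [M1 M2 Bs_sum]]] [a [b [c [d crossing]]]].
have [u [v [x [y [exuv exxy cyc]]]]] := crossing_exchanges M1 M2 crossing.
have /andP [uS vS] := exchangeable_mem M1.1 exuv.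
have /andP [xT yT] := exchangeable_mem M2.1 exxy.
case/exchangeableP: exuv => B1 B1Bs [uB1 vB1 vB1Bs].
case/exchangeableP: exxy => B2 B2Bs [xB2 yB2 yB2Bs].
have [[_ [sub1 _]] _] := M1; have [[_ [sub2 _]] _] := M2.
exists u, x, v, y, (B1 :\ u :|: B2 :\ x); split=> //.
apply: (square_face card_bases Bs_sum sub1 sub2) cyc;
  by rewrite ?setD11 ?setD1K ?inE ?negb_and ?vB1 ?yB2 ?orbT.
Qed.
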